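(* For $x=re^{i\theta}\in C$, $$\|A^S(x)\|^2-\frac{g}{2n}\|H^S(x)\|^2=\frac{n}{2r^2}\big\{g(1-\delta^2)\csc^2 g\theta+(g-2)\big\}.$$ If moreover $m_1=m_2$ (which always holds when $g\in\{1,3,6\}$), then $$\|A^S(x)\|^2-\frac{g}{n}\|H^S(x)\|^2=\frac{n(g-1)}{r^2}.$$
   Context: Let $M^n$ be a compact isoparametric hypersurface in the unit sphere $S^{n+1}\subset\mathbb{R}^{n+2}$ (constant principal curvatures) with $g$ distinct principal curvatures; then $g\in\{1,2,3,4,6\}$. Fix $x_0\in M$ and identify the 2-dimensional normal space $\nu_{x_0}M$ of $M$ in $\mathbb{R}^{n+2}$ with $\mathbb{C}$ so that the two focal submanifolds $M_+$, $M_-$ ($\dim M_+\le\dim M_-$) meet the normal circle at $1$ and $e^{i\pi/g}$ (the intersection points closest to $x_0$). The Weyl chamber is $C=\{re^{i\theta}:r>0,\ 0<\theta<\pi/g\}$. For $k=1,\dots,g$ let $\theta_k=k\pi/g-\pi/2$, $\alpha_k=e^{i\theta_k}$, and $m_k=m_1$ for $k$ odd, $m_k=m_2$ for $k$ even, where $(m_1,m_2)$, $m_1\le m_2$, is the multiplicity data of the principal curvatures; $m_1=m_2$ if $g$ is odd, and $(m_1+m_2)g=2n$. For $x\in C$, $M_x=\{p+\tilde\xi(p):p\in M\}$ where $\tilde\xi$ is the parallel normal field on $M$ with $\tilde\xi(x_0)=x-x_0$; it is an $n$-dimensional isoparametric submanifold of $\mathbb{R}^{n+2}$ lying in $S^{n+1}(|x|)$,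 with normal space $\nu_{x_0}M$ at $x$, and $T_xM_x=\oplus_kE_k$, $\dim E_k=m_k$, with Euclidean shape operator $A_\xi|_{E_k}=\langle\xi,-\alpha_k/\langle x,\alpha_k\rangle\rangle\mathrm{Id}$ ($\langle\cdot,\cdot\rangle$ the real inner product on $\mathbb{C}=\mathbb{R}^2$). $H^E(x),A^E(x)$ denote mean curvature vector and shape operator of $M_x$ at $x$ in $\mathbb{R}^{n+2}$; $H^S(x),A^S(x)$ those of $M_x$ as a hypersurface of $S^{n+1}(|x|)$; $\|A\|^2$ is the sum of squared Hilbert–Schmidt norms over an orthonormal normal basis. Set $\delta=(m_2-m_1)/(m_2+m_1)$ if $g\ge2$ and $\delta=0$ if $g=1$, and let $\theta_{\min}\in(0,\pi/g)$ be defined by $\cos g\theta_{\min}=-\delta$. *)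

From Stdlib Require Import Reals Lra Lia Arith.
Open Scope R_scope.

(* The normal space nu_{x0}M of M in R^{n+2} is identified with C = R^2;
   points of it are pairs (a,b) <-> a + i b. *)
Definition cplx : Type := (R * R)%type.
Definition cinner (u v : cplx) : R := fst u * fst v + snd u * snd v.
Definition cnorm (u : cplx) : R := sqrt (cinner u u).
Definition cscale (c : R) (u : cplx) : cplx := (c * fst u, c * snd u).
Definition cmul_i (u : cplx) : cplx := (- snd u, fst u).
Definition polar (r theta : R) : cplx := (r * cos theta, r * sin theta).

Fixpoint sum1 (g : nat) (F : nat -> R) : R :=
  match g with
  | O => 0
  | S g' => sum1 g' F + F (S g')
  end.

Definition theta_k (g k : nat) : R := INR k * PI / INR g - PI / 2.
Definition alpha_k (g k : nat) : cplx := polar 1 (theta_k g k).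

Definition mult_k (m1 m2 k : nat) : nat := if Nat.odd k then m1 else m2.

(* Euclidean shape operator of M_x at x in direction xi, restricted to E_k:
   A_xi|E_k = < xi , - alpha_k / <x, alpha_k> > Id.  Its eigenvalue: *)
Definition shapeE_eig (g : nat) (x xi : cplx) (k : nat) : R :=
  cinner xi (cscale (- / cinner x (alpha_k g k)) (alpha_k g k)).

(* M_x lies in the sphere S^{n+1}(|x|); its unit normal in that sphere at x
   is the unit vector of nu_{x0}M orthogonal to x, namely i x/|x|.
   The shape operator A^S(x) of M_x as a hypersurface of S^{n+1}(|x|) is the
   Euclidean shape operator in this direction; it acts on E_k (dim m_k) as
   the scalar shapeE_eig g x (i x/|x|) k. *)
Definition sphere_normal (x : cplx) : cplx := cscale (/ cnorm x) (cmul_i x).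

Definition shapeS_eig (g : nat) (x : cplx) (k : nat) : R :=
  shapeE_eig g x (sphere_normal x) k.

(* ||A^S(x)||^2 : squared Hilbert-Schmidt norm (one unit normal) =
   sum_k m_k * (eigenvalue on E_k)^2 *)
Definition normAS2 (g m1 m2 : nat) (x : cplx) : R :=
  sum1 g (fun k => INR (mult_k m1 m2 k) * (shapeS_eig g x k) ^ 2).

(* H^S(x) = (trace A^S(x)) * unit normal, hence
   ||H^S(x)||^2 = (sum_k m_k * eigenvalue on E_k)^2 *)
Definition normHS2 (g m1 m2 : nat) (x : cplx) : R :=
  (sum1 g (fun k => INR (mult_k m1 m2 k) * shapeS_eig g x k)) ^ 2.

Definition delta (g m1 m2 : nat) : R :=
  if (2 <=? g)%nat then (INR m2 - INR m1) / (INR m2 + INR m1) else 0.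

Definition iso_data (g m1 m2 n : nat) : Prop :=
  (g = 1 \/ g = 2 \/ g = 3 \/ g = 4 \/ g = 6)%nat /\
  (1 <= m1)%nat /\ (m1 <= m2)%nat /\
  (Nat.odd g = true -> m1 = m2) /\
  ((m1 + m2) * g = 2 * n)%nat.

(* On E_k the shape operator of M_x in S^{n+1}(r) is multiplication by
   -cot(theta - k pi/g)/r.  The cotangents over a full period of angles
   psi - j pi/h (j = 1..h) satisfy  sum cot = h cot(h psi)  and
   sum cot^2 = h^2 (1 + cot^2(h psi)) - h.  For odd g all multiplicities are
   equal and these sums apply with h = g.  For g = 2h the even-indexed and the
   odd-indexed directions each form such a period, the odd ones shifted by
   pi/g, which turns cot(h theta) into -tan(h theta).  Both identities are then
   rational identities in w = cot(h theta). *)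

From Stdlib Require Import Reals Lra Lia.
Open Scope R_scope.

(* Where sin x = 0 this is cos x / 0 = 0.  The shape operator divides by
   <x, alpha_k> = -r sin(theta - k pi/g), which vanishes at the same points,
   so shapeS_eig_polar needs no hypothesis. *)
Definition cot (x : R) : R := cos x / sin x.

Lemma cnorm_polar r theta : 0 < r -> cnorm (polar r theta) = r.
Proof.
  intros Hr; unfold cnorm, cinner, polar; simpl.
  replace (r * cos theta * (r * cos theta) + r * sin theta * (r * sin theta))
    with (r * r * ((sin theta)² + (cos theta)²)) by (unfold Rsqr; ring).
  rewrite sin2_cos2, Rmult_1_r; apply sqrt_square; lra.
Qed.

Lemma shapeS_eig_polar g k r theta : 0 < r ->
  shapeS_eig g (polar r theta) k = - cot (theta - INR k * PI / INR g) / r.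
Proof.
  intros Hr.
  unfold shapeS_eig, shapeE_eig, sphere_normal, alpha_k, theta_k, cot.
  rewrite cnorm_polar by exact Hr.
  unfold polar, cinner, cscale, cmul_i; simpl.
  set (phi := INR k * PI / INR g).
  rewrite cos_minus, sin_minus, cos_PI2, sin_PI2, (cos_minus theta), (sin_minus theta).
  replace (r * cos theta * (1 * (cos phi * 0 + sin phi * 1))
           + r * sin theta * (1 * (sin phi * 0 - cos phi * 1)))
    with (- r * (sin theta * cos phi - cos theta * sin phi)) by ring.
  rewrite Rinv_mult, Rinv_opp.
  unfold Rdiv; set (u := / (sin theta * cos phi - cos theta * sin phi)).
  field; lra.
Qed.

Lemma sin_sqr_add_cos_sqr x : sin x ^ 2 + cos x ^ 2 = 1.
Proof. rewrite <- (sin2_cos2 x); unfold Rsqr; ring. Qed.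

Lemma cos_eq_cot_mul_sin x : sin x <> 0 -> cos x = cot x * sin x.
Proof. intros; unfold cot; field; assumption. Qed.

Lemma sin_sqr_cot x : sin x <> 0 -> sin x ^ 2 = / (1 + cot x ^ 2).
Proof.
  intros Hs.
  replace (1 + cot x ^ 2) with ((sin x ^ 2 + cos x ^ 2) / sin x ^ 2)
    by (unfold cot; field; assumption).
  rewrite sin_sqr_add_cos_sqr; field; assumption.
Qed.

Lemma cot_sub x y : sin x <> 0 ->
  cot (x - y) = (cot x * cos y + sin y) / (cos y - cot x * sin y).
Proof.
  intros Hs; unfold cot; rewrite sin_minus, cos_minus.
  replace (cos x / sin x * cos y + sin y)
    with ((cos x * cos y + sin x * sin y) / sin x) by (field; assumption).
  replace (cos y - cos x / sin x * sin y)
    with ((sin x * cos y - cos x * sin y) / sin x) by (field; assumption).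
  unfold Rdiv; rewrite Rinv_mult, Rinv_inv.
  set (u := / (sin x * cos y - cos x * sin y)); field; assumption.
Qed.

Lemma sin_cos_triple x :
  sin (3 * x) = sin x * (3 * cos x ^ 2 - sin x ^ 2) /\
  cos (3 * x) = cos x * (cos x ^ 2 - 3 * sin x ^ 2).
Proof.
  replace (3 * x) with (2 * x + x) by ring.
  rewrite sin_plus, cos_plus, sin_2a, cos_2a; split; ring.
Qed.

Lemma sin_double_neq0 x : sin (2 * x) <> 0 -> sin x <> 0 /\ cos x <> 0.
Proof. rewrite sin_2a; intros H2; split; intro E; apply H2; rewrite E; ring. Qed.

Lemma cot_neq0 x : sin x <> 0 -> cos x <> 0 -> cot x <> 0.
Proof.
  intros Hs Hc; unfold cot, Rdiv.
  apply Rmult_integral_contrapositive_currified; [| apply Rinv_neq_0_compat]; assumption.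
Qed.

Lemma cot_double x : sin (2 * x) <> 0 ->
  cot (2 * x) = (cot x ^ 2 - 1) / (2 * cot x).
Proof.
  intros H2; destruct (sin_double_neq0 x H2) as [Hs Hc].
  unfold cot; rewrite sin_2a, cos_2a; field; auto.
Qed.

(* sin (3x) = sin x ^ 3 * (3 cot x ^ 2 - 1) *)
Lemma cot_triple x : sin (3 * x) <> 0 ->
  sin x <> 0 /\ 3 * cot x ^ 2 - 1 <> 0 /\
  cot (3 * x) = (cot x ^ 3 - 3 * cot x) / (3 * cot x ^ 2 - 1).
Proof.
  destruct (sin_cos_triple x) as [Hsin Hcos]; rewrite Hsin; intros H3.
  assert (Hs : sin x <> 0) by (intro E; apply H3; rewrite E; ring).
  assert (Hc := cos_eq_cot_mul_sin x Hs).
  rewrite Hc in H3.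
  assert (Ht : 3 * cot x ^ 2 - 1 <> 0)
    by (intro E; apply H3; replace (3 * (cot x * sin x) ^ 2 - sin x ^ 2)
          with (sin x ^ 2 * (3 * cot x ^ 2 - 1)) by ring; rewrite E; ring).
  repeat split; try assumption.
  unfold cot at 1; rewrite Hsin, Hcos, Hc; field.
  repeat split; try assumption.
  intro E; apply H3; rewrite E; ring.
Qed.

Lemma cot_sub_pair x y : sin x <> 0 ->
  cos y ^ 2 - cot x ^ 2 * sin y ^ 2 <> 0 ->
  cot (x - y) + cot (x - (PI - y)) =
    2 * cot x / (cos y ^ 2 - cot x ^ 2 * sin y ^ 2) /\
  cot (x - y) ^ 2 + cot (x - (PI - y)) ^ 2 =
    2 * (cot x ^ 2 + (cos y * sin y * (1 + cot x ^ 2)) ^ 2)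
      / (cos y ^ 2 - cot x ^ 2 * sin y ^ 2) ^ 2.
Proof.
  intros Hs HD.
  rewrite !cot_sub by assumption.
  rewrite Rtrigo_facts.cos_pi_minus, sin_PI_x.
  assert (Hy := sin_sqr_add_cos_sqr y).
  set (t := cot x) in *; set (a := cos y) in *; set (b := sin y) in *.
  assert (a - t * b <> 0 /\ - a - t * b <> 0) as [H1 H2].
  { split; intro E; apply HD.
    - replace (a ^ 2 - t ^ 2 * b ^ 2) with ((a - t * b) * (a + t * b)) by ring.
      rewrite E; ring.
    - replace (a ^ 2 - t ^ 2 * b ^ 2) with (- (a - t * b) * (- a - t * b)) by ring.
      rewrite E; ring. }
  assert (a ^ 2 - (t * b) ^ 2 <> 0) by (rewrite Rpow_mult_distr; exact HD).
  (* the pair of values is symmetric in b -> -b, so only a^2 and b^2 survive *)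
  split.
  - transitivity (2 * t * (b ^ 2 + a ^ 2) / (a ^ 2 - t ^ 2 * b ^ 2));
      [field | rewrite Hy; field]; repeat split; auto.
  - transitivity (2 * (t ^ 2 * (b ^ 2 + a ^ 2) ^ 2 + (a * b * (1 + t ^ 2)) ^ 2)
                    / (a ^ 2 - t ^ 2 * b ^ 2) ^ 2);
      [field | rewrite Hy; field]; repeat split; auto.
Qed.

Lemma cot_sub_PI x : cot (x - PI) = cot x.
Proof.
  unfold cot; rewrite sin_minus, cos_minus, sin_PI, cos_PI.
  replace (cos x * -1 + sin x * 0) with (- cos x) by ring.
  replace (sin x * -1 - cos x * 0) with (- sin x) by ring.
  unfold Rdiv; rewrite Rinv_opp; ring.
Qed.

Lemma cot_add_PI2 x : cot (x + PI / 2) = - / cot x.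
Proof.
  unfold cot; rewrite sin_plus, cos_plus, sin_PI2, cos_PI2, Rinv_div.
  replace (cos x * 0 - sin x * 1) with (- sin x) by ring.
  replace (sin x * 0 + cos x * 1) with (cos x) by ring.
  unfold Rdiv; ring.
Qed.

Lemma cot_period_sums_1 x :
  sum1 1 (fun j => cot (x - INR j * PI / INR 1)) = INR 1 * cot (INR 1 * x) /\
  sum1 1 (fun j => cot (x - INR j * PI / INR 1) ^ 2)
    = INR 1 ^ 2 * (1 + cot (INR 1 * x) ^ 2) - INR 1.
Proof.
  cbn [sum1].
  replace (INR 1 * PI / INR 1) with PI by (simpl; field).
  replace (INR 1) with 1 by reflexivity.
  rewrite cot_sub_PI, (Rmult_1_l x); split; ring.
Qed.

Lemma cot_period_sums_2 x : sin (INR 2 * x) <> 0 ->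
  sum1 2 (fun j => cot (x - INR j * PI / INR 2)) = INR 2 * cot (INR 2 * x) /\
  sum1 2 (fun j => cot (x - INR j * PI / INR 2) ^ 2)
    = INR 2 ^ 2 * (1 + cot (INR 2 * x) ^ 2) - INR 2.
Proof.
  replace (INR 2) with 2 by (simpl; ring); intros H2.
  destruct (sin_double_neq0 x H2) as [Hs Hc].
  assert (Ht := cot_neq0 x Hs Hc).
  cbn [sum1].
  replace (x - INR 1 * PI / 2) with ((x + PI / 2) - PI) by (simpl; field).
  replace (x - INR 2 * PI / 2) with (x - PI) by (simpl; field).
  rewrite !cot_sub_PI, cot_add_PI2, cot_double by assumption.
  split; field; assumption.
Qed.

Lemma cot_period_sums_3 x : sin (INR 3 * x) <> 0 ->
  sum1 3 (fun j => cot (x - INR j * PI / INR 3)) = INR 3 * cot (INR 3 * x) /\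
  sum1 3 (fun j => cot (x - INR j * PI / INR 3) ^ 2)
    = INR 3 ^ 2 * (1 + cot (INR 3 * x) ^ 2) - INR 3.
Proof.
  replace (INR 3) with 3 by (simpl; ring); intros H3.
  destruct (cot_triple x H3) as [Hs [Ht Hcot3]].
  assert (Hc : cos (PI / 3) ^ 2 = 1 / 4) by (rewrite cos_PI3; field).
  assert (Hsn : sin (PI / 3) ^ 2 = 3 / 4)
    by (pose proof (sin_sqr_add_cos_sqr (PI / 3)); lra).
  assert (HD : cos (PI / 3) ^ 2 - cot x ^ 2 * sin (PI / 3) ^ 2 <> 0)
    by (rewrite Hc, Hsn; intro E; apply Ht; lra).
  destruct (cot_sub_pair x (PI / 3) Hs HD) as [Hsum Hsq].
  cbn [sum1].
  replace (x - INR 1 * PI / 3) with (x - PI / 3) by (simpl; field).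
  replace (x - INR 2 * PI / 3) with (x - (PI - PI / 3)) by (simpl; field).
  replace (x - INR 3 * PI / 3) with (x - PI) by (simpl; field).
  rewrite cot_sub_PI, Hcot3.
  split.
  - rewrite Rplus_0_l, Hsum, Hc, Hsn; field; split; [assumption | lra].
  - rewrite Rplus_0_l, Hsq, Rpow_mult_distr, Rpow_mult_distr, Hc, Hsn.
    field; split; [assumption | lra].
Qed.

Lemma cot_period_sums h x : (h = 1 \/ h = 2 \/ h = 3)%nat -> sin (INR h * x) <> 0 ->
  sum1 h (fun j => cot (x - INR j * PI / INR h)) = INR h * cot (INR h * x) /\
  sum1 h (fun j => cot (x - INR j * PI / INR h) ^ 2)
    = INR h ^ 2 * (1 + cot (INR h * x) ^ 2) - INR h.
Proof.
  intros [-> | [-> | ->]] Hs.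
  - exact (cot_period_sums_1 x).
  - exact (cot_period_sums_2 x Hs).
  - exact (cot_period_sums_3 x Hs).
Qed.

Lemma sum1_ext_in g F G : (forall k, (1 <= k <= g)%nat -> F k = G k) ->
  sum1 g F = sum1 g G.
Proof.
  induction g as [|g IH]; intros HFG; cbn [sum1]; [reflexivity|].
  rewrite IH, HFG; [reflexivity | lia | intros k Hk; apply HFG; lia].
Qed.

Lemma sum1_scal g c F : sum1 g (fun k => c * F k) = c * sum1 g F.
Proof. induction g as [|g IH]; cbn [sum1]; [ring | rewrite IH; ring]. Qed.

Lemma sum1_div g c F : sum1 g (fun k => F k / c) = sum1 g F / c.
Proof. unfold Rdiv; rewrite Rmult_comm, <- sum1_scal; apply sum1_ext_in; intros; ring. Qed.

Lemma sum1_split_parity h F :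
  sum1 (2 * h) F = sum1 h (fun j => F (2 * j - 1)%nat) + sum1 h (fun j => F (2 * j)%nat).
Proof.
  induction h as [|h IH]; [cbn; ring|].
  replace (2 * S h)%nat with (S (S (2 * h))) by lia.
  cbn [sum1]; rewrite IH.
  replace (2 * S h - 1)%nat with (S (2 * h)) by lia.
  replace (2 * S h)%nat with (S (S (2 * h))) by lia.
  ring.
Qed.

Lemma mult_k_diag m k : mult_k m m k = m.
Proof. unfold mult_k; destruct (Nat.odd k); reflexivity. Qed.

Lemma sum1_mult_k_diag g m F :
  sum1 g (fun k => INR (mult_k m m k) * F k) = INR m * sum1 g F.
Proof.
  rewrite <- sum1_scal; apply sum1_ext_in; intros k _; rewrite mult_k_diag; reflexivity.
Qed.

Lemma sum1_mult_k_even h m1 m2 F :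
  sum1 (2 * h) (fun k => INR (mult_k m1 m2 k) * F k) =
    INR m1 * sum1 h (fun j => F (2 * j - 1)%nat) + INR m2 * sum1 h (fun j => F (2 * j)%nat).
Proof.
  rewrite sum1_split_parity, <- !sum1_scal; f_equal; apply sum1_ext_in; intros j Hj;
    unfold mult_k.
  - replace (2 * j - 1)%nat with (1 + 2 * (j - 1))%nat by lia.
    rewrite Nat.odd_add_mul_2; reflexivity.
  - rewrite Nat.odd_even; reflexivity.
Qed.

Lemma normAS2_polar g m1 m2 r theta : 0 < r ->
  normAS2 g m1 m2 (polar r theta) =
    sum1 g (fun k => INR (mult_k m1 m2 k) * cot (theta - INR k * PI / INR g) ^ 2) / r ^ 2.
Proof.
  intros Hr; unfold normAS2; rewrite <- sum1_div.
  apply sum1_ext_in; intros k _; rewrite shapeS_eig_polar by exact Hr.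
  field; lra.
Qed.

Lemma normHS2_polar g m1 m2 r theta : 0 < r ->
  normHS2 g m1 m2 (polar r theta) =
    sum1 g (fun k => INR (mult_k m1 m2 k) * cot (theta - INR k * PI / INR g)) ^ 2 / r ^ 2.
Proof.
  intros Hr; unfold normHS2.
  rewrite (sum1_ext_in g _
    (fun k => - / r * (INR (mult_k m1 m2 k) * cot (theta - INR k * PI / INR g)))).
  - rewrite sum1_scal; field; lra.
  - intros k _; rewrite shapeS_eig_polar by exact Hr; field; lra.
Qed.

Lemma norms_polar_odd g m r theta : (g = 1 \/ g = 3)%nat -> 0 < r ->
  sin (INR g * theta) <> 0 ->
  normAS2 g m m (polar r theta) =
    INR m * (INR g ^ 2 * (1 + cot (INR g * theta) ^ 2) - INR g) / r ^ 2 /\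
  normHS2 g m m (polar r theta) = (INR m * (INR g * cot (INR g * theta))) ^ 2 / r ^ 2.
Proof.
  intros Hg Hr Hs.
  destruct (cot_period_sums g theta) as [Hsum Hsq]; [lia | exact Hs |].
  rewrite normAS2_polar, normHS2_polar, !sum1_mult_k_diag, Hsum, Hsq by exact Hr.
  split; reflexivity.
Qed.

Lemma norms_polar_even h m1 m2 r theta : (h = 1 \/ h = 2 \/ h = 3)%nat -> 0 < r ->
  sin (INR (2 * h) * theta) <> 0 ->
  normAS2 (2 * h) m1 m2 (polar r theta) =
    (INR m1 * (INR h ^ 2 * (1 + (- / cot (INR h * theta)) ^ 2) - INR h)
     + INR m2 * (INR h ^ 2 * (1 + cot (INR h * theta) ^ 2) - INR h)) / r ^ 2 /\
  normHS2 (2 * h) m1 m2 (polar r theta) =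
    (INR m1 * (INR h * - / cot (INR h * theta))
     + INR m2 * (INR h * cot (INR h * theta))) ^ 2 / r ^ 2.
Proof.
  intros Hh Hr Hs.
  assert (Hh0 : INR h <> 0) by (apply not_0_INR; lia).
  replace (INR (2 * h) * theta) with (2 * (INR h * theta)) in Hs
    by (rewrite mult_INR; simpl; ring).
  destruct (sin_double_neq0 _ Hs) as [Hsin Hcos].
  (* odd k = 2j-1 are the angles of a full period shifted by pi/(2h) *)
  set (psi := theta + PI / INR (2 * h)).
  assert (Hodd : forall F : R -> R,
    sum1 h (fun j => F (theta - INR (2 * j - 1) * PI / INR (2 * h))) =
    sum1 h (fun j => F (psi - INR j * PI / INR h))).
  { intros F; apply sum1_ext_in; intros j Hj; f_equal; unfold psi.
    rewrite minus_INR, !mult_INR by lia; simpl; field; assumption. }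
  assert (Heven : forall F : R -> R,
    sum1 h (fun j => F (theta - INR (2 * j) * PI / INR (2 * h))) =
    sum1 h (fun j => F (theta - INR j * PI / INR h))).
  { intros F; apply sum1_ext_in; intros j Hj; f_equal.
    rewrite !mult_INR; simpl; field; assumption. }
  assert (Hpsi : INR h * psi = INR h * theta + PI / 2)
    by (unfold psi; rewrite mult_INR; simpl; field; assumption).
  assert (Hspsi : sin (INR h * psi) <> 0).
  { rewrite Hpsi, sin_plus, sin_PI2, cos_PI2.
    replace (sin (INR h * theta) * 0 + cos (INR h * theta) * 1)
      with (cos (INR h * theta)) by ring.
    exact Hcos. }
  destruct (cot_period_sums h psi Hh Hspsi) as [Hsum_o Hsq_o].
  destruct (cot_period_sums h theta Hh Hsin) as [Hsum_e Hsq_e].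
  rewrite Hpsi, cot_add_PI2 in Hsum_o, Hsq_o.
  rewrite normAS2_polar, normHS2_polar, !sum1_mult_k_even by exact Hr.
  pose proof (Hodd (fun y => cot y ^ 2)) as Hodd2.
  pose proof (Heven (fun y => cot y ^ 2)) as Heven2.
  cbv beta in Hodd2, Heven2.
  rewrite Hodd2, (Hodd cot), Heven2, (Heven cot).
  rewrite Hsum_o, Hsq_o, Hsum_e, Hsq_e.
  split; reflexivity.
Qed.

Definition shape_norm_identities (g m1 m2 n : nat) (r theta : R) : Prop :=
  normAS2 g m1 m2 (polar r theta)
    - INR g / (2 * INR n) * normHS2 g m1 m2 (polar r theta) =
    INR n / (2 * r ^ 2) *
      (INR g * (1 - (delta g m1 m2) ^ 2) / (sin (INR g * theta)) ^ 2 + (INR g - 2))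
  /\
  (m1 = m2 ->
   normAS2 g m1 m2 (polar r theta) - INR g / INR n * normHS2 g m1 m2 (polar r theta) =
     INR n * (INR g - 1) / r ^ 2).

Lemma sin_chamber_pos g theta : (1 <= g)%nat -> 0 < theta -> theta < PI / INR g ->
  0 < sin (INR g * theta).
Proof.
  intros Hg H0 H1.
  assert (Hg0 : 0 < INR g) by (apply lt_0_INR; lia).
  apply sin_gt_0; [nra|].
  replace PI with (INR g * (PI / INR g)) by (field; lra).
  apply Rmult_lt_compat_l; assumption.
Qed.

Lemma delta_diag g m : delta g m m = 0.
Proof. unfold delta; destruct (2 <=? g)%nat; [unfold Rdiv; ring | reflexivity]. Qed.

Lemma delta_ge2 g m1 m2 : (2 <= g)%nat ->
  delta g m1 m2 = (INR m2 - INR m1) / (INR m2 + INR m1).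
Proof. intros Hg; unfold delta; rewrite (proj2 (Nat.leb_le 2 g) Hg); reflexivity. Qed.

Lemma shape_norm_identities_odd g m n r theta : (g = 1 \/ g = 3)%nat -> (1 <= m)%nat ->
  ((m + m) * g = 2 * n)%nat -> 0 < r -> 0 < theta -> theta < PI / INR g ->
  shape_norm_identities g m m n r theta.
Proof.
  intros Hg Hm Hn Hr H0 H1.
  assert (Hs : sin (INR g * theta) <> 0)
    by (apply Rgt_not_eq, sin_chamber_pos; [lia | assumption | assumption]).
  destruct (norms_polar_odd g m r theta Hg Hr Hs) as [HA HH].
  assert (Hn' : INR n = INR m * INR g)
    by (apply (f_equal INR) in Hn; rewrite !mult_INR, plus_INR in Hn; simpl in Hn; lra).
  assert (Hm0 : INR m <> 0) by (apply not_0_INR; lia).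
  assert (Hg0 : INR g <> 0) by (apply not_0_INR; lia).
  assert (Hw : 1 + cot (INR g * theta) ^ 2 <> 0)
    by (pose proof (pow2_ge_0 (cot (INR g * theta))); lra).
  unfold shape_norm_identities.
  rewrite HA, HH, delta_diag, (sin_sqr_cot _ Hs), Hn'.
  split; [| intros _]; field; repeat split; lra.
Qed.

Lemma shape_norm_identities_even h m1 m2 n r theta : (h = 1 \/ h = 2 \/ h = 3)%nat ->
  (1 <= m1)%nat -> ((m1 + m2) * (2 * h) = 2 * n)%nat ->
  0 < r -> 0 < theta -> theta < PI / INR (2 * h) ->
  shape_norm_identities (2 * h) m1 m2 n r theta.
Proof.
  intros Hh Hm1 Hn Hr H0 H1.
  assert (Hs : sin (INR (2 * h) * theta) <> 0)
    by (apply Rgt_not_eq, sin_chamber_pos; [lia | assumption | assumption]).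
  destruct (norms_polar_even h m1 m2 r theta Hh Hr Hs) as [HA HH].
  assert (H2h : INR (2 * h) * theta = 2 * (INR h * theta))
    by (rewrite mult_INR; simpl; ring).
  rewrite H2h in Hs.
  destruct (sin_double_neq0 _ Hs) as [Hsin Hcos].
  assert (Hw := cot_neq0 _ Hsin Hcos).
  assert (Hn' : INR n = INR h * (INR m1 + INR m2))
    by (apply (f_equal INR) in Hn; rewrite !mult_INR, plus_INR in Hn; simpl in Hn; lra).
  assert (Hh0 : INR h <> 0) by (apply not_0_INR; lia).
  assert (Hm1' : 1 <= INR m1) by (apply (le_INR 1); lia).
  assert (Hm2' : 0 <= INR m2) by apply pos_INR.
  set (w := cot (INR h * theta)) in *.
  assert (Hcot2 := cot_double _ Hs); fold w in Hcot2.
  unfold shape_norm_identities.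
  rewrite HA, HH, H2h, (sin_sqr_cot _ Hs), Hcot2, delta_ge2, Hn', mult_INR by lia.
  replace (INR 2) with 2 by (simpl; ring).
  split; [| intros <-]; field; repeat split; try lra; auto.
  intro E; apply Hw; nra.
Qed.

Theorem lemma4p11 (g m1 m2 n : nat) (r theta : R) :
  iso_data g m1 m2 n ->
  0 < r -> 0 < theta -> theta < PI / INR g ->
  let x := polar r theta in
  normAS2 g m1 m2 x - INR g / (2 * INR n) * normHS2 g m1 m2 x =
    INR n / (2 * r ^ 2) *
      (INR g * (1 - (delta g m1 m2) ^ 2) / (sin (INR g * theta)) ^ 2
       + (INR g - 2))
  /\
  (m1 = m2 ->
   normAS2 g m1 m2 x - INR g / INR n * normHS2 g m1 m2 x =
     INR n * (INR g - 1) / r ^ 2).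
Proof.
  intros [Hg [Hm1 [_ [Hodd Hn]]]] Hr H0 H1.
  destruct Hg as [-> | [-> | [-> | [-> | ->]]]].
  - specialize (Hodd eq_refl); subst m2.
    exact (shape_norm_identities_odd 1 m1 n r theta (or_introl eq_refl) Hm1 Hn Hr H0 H1).
  - exact (shape_norm_identities_even 1 m1 m2 n r theta
             (or_introl eq_refl) Hm1 Hn Hr H0 H1).
  - specialize (Hodd eq_refl); subst m2.
    exact (shape_norm_identities_odd 3 m1 n r theta (or_intror eq_refl) Hm1 Hn Hr H0 H1).
  - exact (shape_norm_identities_even 2 m1 m2 n r theta
             (or_intror (or_introl eq_refl)) Hm1 Hn Hr H0 H1).
  - exact (shape_norm_identities_even 3 m1 m2 n r theta
             (or_intror (or_intror eq_refl)) Hm1 Hn Hr H0 H1).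
Qed.
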